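(* Let $\mu,\nu$ be constants and consider the equation $m_t+f(u,u_x)m+(g(u,u_x)m)_x=0$, $m=u-u_{xx}$, where $(f,g)$ belongs to one of the three families: (a) $\nu=0$, $\mu=2$, $f=-\tfrac12u_xh'(u)$, $g=h(u)$ with $h$ an arbitrary smooth function; (b) $\nu\neq0$, $\mu=2$, $f=\alpha u_x$, $g=-2\alpha u+\beta$ with $\alpha,\beta$ constants; (c) $\mu\neq2$, $\nu=(\mu-2)\beta$, $f=\alpha u_x/(u+\beta)^3$, $g=\alpha/(u+\beta)^2$ with $\alpha,\beta$ constants. Then for every locally smooth solution $u(t,x)$ the local conservation law $D_tT+D_x\Phi=0$ holds with $$T=u_{xx}^2+\mu u_x^2+(\mu-1)u^2+2\nu u,$$ $$\Phi=2((1-\mu)u-\nu)u_{tx}-2u_xu_t+\big(2((\mu-2)u+\nu)+m\big)mg+\big((2-\mu)(u^2-u_x^2)-\nu u\big)g+\tfrac12((\mu-2)u+\nu)u_x^2g_u+\nu G,$$ where $G=\int g\,du$. Consequently, on a spatial domain $\Omega\subseteq\mathbb R$, the gradient energy $E[u]=\int_\Omega u_{xx}^2+\mu u_x^2+(\mu-1)u^2+2\nu u\,dx$ satisfies $\frac{d}{dt}E=0$ for all solutions whose flux $\Phi$ vanishes at $\partial\Omega$.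
   Context: $D_t$, $D_x$ denote total derivatives; the conservation law holds on solutions, i.e. after eliminating $m_t$ via $m_t=-f(u,u_x)m-(g(u,u_x)m)_x$. In each family $g$ depends only on $u$, $g_u$ is its derivative, and $G$ is an antiderivative of $g$ with respect to $u$. In family (c) the expressions are considered where $u+\beta\neq0$. *)

From Stdlib Require Import Reals Lra List.
From Coquelicot Require Import Coquelicot.
Open Scope R_scope.

Definition pDt (u : R -> R -> R) : R -> R -> R :=
  fun t x => Derive (fun s => u s x) t.
Definition pDx (u : R -> R -> R) : R -> R -> R :=
  fun t x => Derive (fun y => u t y) x.

(* iterated partial derivative: true = d/dt, false = d/dx, applied
   from the end of the list first *)
Fixpoint pd (l : list bool) (u : R -> R -> R) : R -> R -> R :=
  match l with
  | nil => u
  | b :: l' => if b then pDt (pd l' u) else pDx (pd l' u)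
  end.

Definition smooth_on (D : R * R -> Prop) (u : R -> R -> R) : Prop :=
  forall (l : list bool) (t x : R), D (t, x) ->
    continuous (fun p : R * R => pd l u (fst p) (snd p)) (t, x) /\
    ex_derive (fun s => pd l u s x) t /\
    ex_derive (fun y => pd l u t y) x.

Definition smooth1 (h : R -> R) : Prop :=
  forall (n : nat) (y : R), ex_derive (Derive_n h n) y.

Definition mfun (u : R -> R -> R) : R -> R -> R :=
  fun t x => u t x - pDx (pDx u) t x.

Definition is_solution (f : R -> R -> R) (g : R -> R)
  (D : R * R -> Prop) (u : R -> R -> R) : Prop :=
  forall t x, D (t, x) ->
    pDt (mfun u) t x + f (u t x) (pDx u t x) * mfun u t x
    + pDx (fun s y => g (u s y) * mfun u s y) t x = 0.

Definition family_a (mu nu : R) (f : R -> R -> R) (g G : R -> R) : Prop :=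
  exists h : R -> R, smooth1 h /\ nu = 0 /\ mu = 2 /\
    (forall y p, f y p = - (1/2) * p * Derive h y) /\
    (forall y, g y = h y) /\
    (forall y, is_derive G y (g y)).

Definition family_b (mu nu : R) (f : R -> R -> R) (g G : R -> R) : Prop :=
  exists alpha beta : R, nu <> 0 /\ mu = 2 /\
    (forall y p, f y p = alpha * p) /\
    (forall y, g y = -2 * alpha * y + beta) /\
    (forall y, is_derive G y (g y)).

Definition family_c (mu nu : R) (f : R -> R -> R) (g G : R -> R)
  (D : R * R -> Prop) (u : R -> R -> R) : Prop :=
  exists alpha beta : R, mu <> 2 /\ nu = (mu - 2) * beta /\
    (forall y p, y + beta <> 0 -> f y p = alpha * p / (y + beta) ^ 3) /\
    (forall y, y + beta <> 0 -> g y = alpha / (y + beta) ^ 2) /\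
    (forall y, y + beta <> 0 -> is_derive G y (g y)) /\
    (forall t x, D (t, x) -> u t x + beta <> 0).

Definition Tdens (mu nu : R) (u : R -> R -> R) : R -> R -> R :=
  fun t x => (pDx (pDx u) t x) ^ 2 + mu * (pDx u t x) ^ 2
             + (mu - 1) * (u t x) ^ 2 + 2 * nu * u t x.

Definition Phi (mu nu : R) (g G : R -> R) (u : R -> R -> R) : R -> R -> R :=
  fun t x =>
    let U := u t x in
    let Ux := pDx u t x in
    let Ut := pDt u t x in
    let Utx := pDx (pDt u) t x in
    let M := mfun u t x in
    2 * ((1 - mu) * U - nu) * Utx - 2 * Ux * Ut
    + (2 * ((mu - 2) * U + nu) + M) * M * g U
    + ((2 - mu) * (U ^ 2 - Ux ^ 2) - nu * U) * g U
    + (1/2) * ((mu - 2) * U + nu) * Ux ^ 2 * Derive g U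
    + nu * G U.

Definition Energy (mu nu : R) (u : R -> R -> R) (a b : R) : R -> R :=
  fun t => RInt (fun x => Tdens mu nu u t x) a b.

(* Along any smooth u, with w := (mu - 2) u + nu, g1 := g'(u), g2 := g''(u) and G' = g,
   a direct computation gives
     D_t T + D_x Phi = 2 (m + w) (m_t + (g m)_x) - (m + w) m u_x g1
                       + 1/2 u_x^3 (3 (mu - 2) g1 + w g2).
   On a solution m_t + (g m)_x = - f m, so the right-hand side is
     - (m + w) m (2 f + u_x g1) + 1/2 u_x^3 (3 (mu - 2) g1 + w g2),
   and in each of the three families both brackets vanish identically.
   Integrating the local law over [a, b] gives dE/dt = Phi(a) - Phi(b). *)
From Stdlib Require Import Reals Lra List.
From Coquelicot Require Import Coquelicot.
Import ListNotations.
Open Scope R_scope.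

Lemma is_derive_eq (h : R -> R) (x l l' : R) :
  is_derive h x l' -> l' = l -> is_derive h x l.
Proof. now intros H ->. Qed.

(* Coquelicot's generic rules state the derivative with [plus], [scal], ..., which
   [ring] does not see through. *)
Lemma is_derive_Rplus (h k : R -> R) x dh dk :
  is_derive h x dh -> is_derive k x dk -> is_derive (fun y => h y + k y) x (dh + dk).
Proof. exact (is_derive_plus h k x dh dk). Qed.

Lemma is_derive_Rminus (h k : R -> R) x dh dk :
  is_derive h x dh -> is_derive k x dk -> is_derive (fun y => h y - k y) x (dh - dk).
Proof. exact (is_derive_minus h k x dh dk). Qed.

Lemma is_derive_Ropp (h : R -> R) x dh :
  is_derive h x dh -> is_derive (fun y => - h y) x (- dh).
Proof. exact (is_derive_opp h x dh). Qed.

Lemma is_derive_Rsqr (h : R -> R) x dh :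
  is_derive h x dh -> is_derive (fun y => h y ^ 2) x (2 * dh * h x).
Proof.
  intros H; eapply is_derive_eq; [exact (is_derive_pow h 2 x dh H) | simpl; ring].
Qed.

Lemma is_derive_Rcomp (h k : R -> R) x dh dk :
  is_derive h (k x) dh -> is_derive k x dk -> is_derive (fun y => h (k y)) x (dh * dk).
Proof.
  intros Hh Hk; eapply is_derive_eq; [exact (is_derive_comp h k x dh dk Hh Hk) |].
  change (dk * dh = dh * dk); ring.
Qed.

Lemma continuity_2d_pt_continuous_snd (F : R -> R -> R) t x :
  continuity_2d_pt F t x -> continuous (F t) x.
Proof.
  intros H; apply continuity_2d_pt_filterlim in H.
  apply (continuous_comp_2 (fun _ => t) (fun y => y) F);
    [apply continuous_const | apply continuous_id | exact H].
Qed.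

Lemma open_locally_2d (D : R * R -> Prop) (P : R -> R -> Prop) t x :
  open D -> D (t, x) -> (forall s y, D (s, y) -> P s y) -> locally_2d P t x.
Proof.
  intros HD Hin HP; apply locally_2d_locally.
  apply (locally_open D); [exact HD | intros [s y]; apply HP | exact Hin].
Qed.

Lemma open_locally_snd (D : R * R -> Prop) t x :
  open D -> D (t, x) -> locally x (fun y => D (t, y)).
Proof.
  intros HD Hin.
  apply (locally_2d_1d_const_x (fun s y => D (s, y))).
  now apply (open_locally_2d D).
Qed.

Lemma pd_app (l l' : list bool) (F : R -> R -> R) : pd l (pd l' F) = pd (l ++ l') F.
Proof. induction l as [|[|] l IH]; simpl; rewrite ?IH; reflexivity. Qed.

Section SmoothFunctions.

Variable D : R * R -> Prop.

Lemma smooth_on_pDx (F : R -> R -> R) : smooth_on D F -> smooth_on D (pDx F).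
Proof.
  intros HS l t x Hin; change (pDx F) with (pd [false] F).
  rewrite pd_app; exact (HS _ t x Hin).
Qed.

Lemma smooth_on_pDt (F : R -> R -> R) : smooth_on D F -> smooth_on D (pDt F).
Proof.
  intros HS l t x Hin; change (pDt F) with (pd [true] F).
  rewrite pd_app; exact (HS _ t x Hin).
Qed.

Lemma smooth_is_derive_x (F : R -> R -> R) t x :
  smooth_on D F -> D (t, x) -> is_derive (fun y => F t y) x (pDx F t x).
Proof. intros HS Hin; apply Derive_correct, (HS [] t x Hin). Qed.

Lemma smooth_is_derive_t (F : R -> R -> R) t x :
  smooth_on D F -> D (t, x) -> is_derive (fun s => F s x) t (pDt F t x).
Proof. intros HS Hin; apply Derive_correct, (HS [] t x Hin). Qed.

Lemma smooth_continuity_2d (F : R -> R -> R) t x :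
  smooth_on D F -> D (t, x) -> continuity_2d_pt F t x.
Proof. intros HS Hin; apply continuity_2d_pt_filterlim, (HS [] t x Hin). Qed.

Hypothesis HD : open D.

Lemma pDt_pDx_comm (F : R -> R -> R) t x :
  smooth_on D F -> D (t, x) -> pDt (pDx F) t x = pDx (pDt F) t x.
Proof.
  intros HS Hin; apply Schwarz.
  - apply (open_locally_2d D); [exact HD | exact Hin |].
    intros s y Hsy.
    destruct (HS [] s y Hsy) as (_ & Ht & Hx).
    destruct (HS [false] s y Hsy) as (_ & Hxt & _).
    destruct (HS [true] s y Hsy) as (_ & _ & Htx).
    now repeat split.
  - exact (smooth_continuity_2d (pDt (pDx F)) t x
             (smooth_on_pDt _ (smooth_on_pDx _ HS)) Hin).
  - exact (smooth_continuity_2d (pDx (pDt F)) t x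
             (smooth_on_pDx _ (smooth_on_pDt _ HS)) Hin).
Qed.

Lemma pDt_pDx_pDx_comm (F : R -> R -> R) t x :
  smooth_on D F -> D (t, x) -> pDt (pDx (pDx F)) t x = pDx (pDx (pDt F)) t x.
Proof.
  intros HS Hin.
  rewrite (pDt_pDx_comm (pDx F)) by (try apply smooth_on_pDx; assumption).
  apply Derive_ext_loc.
  apply (filter_imp (fun y => D (t, y))); [| exact (open_locally_snd D t x HD Hin)].
  intros y Hy; exact (pDt_pDx_comm F t y HS Hy).
Qed.

End SmoothFunctions.

Ltac smooth_jet :=
  repeat match goal with
  | |- smooth_on _ (pDx _) => apply smooth_on_pDx
  | |- smooth_on _ (pDt _) => apply smooth_on_pDt
  end; assumption.

(* The derivative of the outer function of a composition is taken from the context;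
   the cast turns Coquelicot's [zero] into the real [0]. *)
Ltac derive_jets D :=
  repeat match goal with
  | |- is_derive (fun _ => ?c) ?x _ => exact (is_derive_const c x : is_derive _ x 0)
  | |- is_derive (fun y => @?A y + @?B y) _ _ => eapply (is_derive_Rplus A B)
  | |- is_derive (fun y => @?A y - @?B y) _ _ => eapply (is_derive_Rminus A B)
  | |- is_derive (fun y => @?A y * @?B y) _ _ => eapply (Derive.is_derive_mult A B)
  | |- is_derive (fun y => - @?A y) _ _ => eapply (is_derive_Ropp A)
  | |- is_derive (fun y => @?A y ^ 2) _ _ => eapply (is_derive_Rsqr A)
  | |- is_derive (fun y => ?F ?t y) ?x _ =>
      apply (smooth_is_derive_x D F t x); [smooth_jet | assumption]
  | |- is_derive (fun s => ?F s ?x) ?t _ =>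
      apply (smooth_is_derive_t D F t x); [smooth_jet | assumption]
  | |- is_derive (fun y => ?h (@?K y)) _ _ => eapply (is_derive_Rcomp h K); [eassumption |]
  end.

Ltac continuity_jets D :=
  repeat match goal with
  | |- continuity_2d_pt (fun _ _ => ?c) _ _ => apply continuity_2d_pt_const
  | |- continuity_2d_pt (fun s y => @?A s y + @?B s y) _ _ =>
      apply (continuity_2d_pt_plus A B)
  | |- continuity_2d_pt (fun s y => @?A s y * @?B s y) _ _ =>
      apply (continuity_2d_pt_mult A B)
  | |- continuity_2d_pt (fun s y => ?F s y) ?t ?x =>
      apply (smooth_continuity_2d D F t x); [smooth_jet | assumption]
  end.

Section FluxBalance.

Variables (D : R * R -> Prop) (T Tt F : R -> R -> R) (a b t1 t2 : R).
Hypotheses (HD : open D) (Hab : a <= b)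
  (Htube : forall s x, t1 < s < t2 -> a <= x <= b -> D (s, x))
  (HT_t : forall s x, D (s, x) -> is_derive (fun r => T r x) s (Tt s x))
  (HT_cont : forall s x, D (s, x) -> continuous (T s) x)
  (HTt_cont : forall s x, D (s, x) -> continuity_2d_pt Tt s x)
  (HF_x : forall s x, D (s, x) -> is_derive (fun y => F s y) x (- Tt s x)).

Lemma is_derive_RInt_param_tube t :
  t1 < t < t2 -> is_derive (fun s => RInt (T s) a b) t (RInt (Tt t) a b).
Proof.
  intros Ht.
  assert (Hloc : locally t (fun s => t1 < s < t2)).
  { apply (locally_open (fun s => t1 < s /\ s < t2));
      [apply open_and; [apply open_gt | apply open_lt] | auto | exact Ht]. }
  assert (Hsupp : forall s x, t1 < s < t2 -> Rmin a b <= x <= Rmax a b -> D (s, x)).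
  { intros s x Hs Hx; rewrite Rmin_left, Rmax_right in Hx by exact Hab; auto. }
  eapply is_derive_eq; [apply (is_derive_RInt_param T a b t) |].
  - apply (filter_imp (fun s => t1 < s < t2)); [| exact Hloc].
    intros s Hs x Hx; eexists; exact (HT_t s x (Hsupp s x Hs Hx)).
  - intros x Hx.
    apply (continuity_2d_pt_ext_loc Tt); [| exact (HTt_cont t x (Hsupp t x Ht Hx))].
    apply (open_locally_2d D); [exact HD | exact (Hsupp t x Ht Hx) |].
    intros s y Hsy; symmetry; exact (is_derive_unique _ _ _ (HT_t s y Hsy)).
  - apply (filter_imp (fun s => t1 < s < t2)); [| exact Hloc].
    intros s Hs; apply (@ex_RInt_continuous R_CompleteNormedModule); intros x Hx.
    exact (HT_cont s x (Hsupp s x Hs Hx)).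
  - apply RInt_ext; intros x Hx.
    apply is_derive_unique, HT_t, Hsupp; [exact Ht | lra].
Qed.

Lemma RInt_flux t : t1 < t < t2 -> RInt (Tt t) a b = F t a - F t b.
Proof.
  intros Ht; apply is_RInt_unique.
  assert (Hint : is_RInt (fun x => - Tt t x) a b (minus (F t b) (F t a))).
  { apply (@is_RInt_derive R_CompleteNormedModule); intros x Hx;
      rewrite Rmin_left, Rmax_right in Hx by exact Hab.
    - exact (HF_x t x (Htube t x Ht Hx)).
    - apply (continuous_opp (Tt t)), continuity_2d_pt_continuous_snd, HTt_cont, Htube;
        assumption. }
  apply is_RInt_opp in Hint.
  replace (F t a - F t b) with (opp (minus (F t b) (F t a)))
    by (rewrite opp_minus; reflexivity).
  eapply is_RInt_ext; [| exact Hint].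
  intros x _; apply Ropp_involutive.
Qed.

End FluxBalance.

Definition admissible_at (mu nu : R) (f : R -> R -> R) (g G : R -> R) (y : R) : Prop :=
  exists g1 g2 : R,
    is_derive g y g1 /\ is_derive (Derive g) y g2 /\ is_derive G y (g y) /\
    (forall p, 2 * f y p + p * g1 = 0) /\
    3 * (mu - 2) * g1 + ((mu - 2) * y + nu) * g2 = 0.

Definition Tdens_t (mu nu : R) (u : R -> R -> R) (t x : R) : R :=
  2 * pDx (pDx u) t x * pDt (pDx (pDx u)) t x + 2 * mu * pDx u t x * pDt (pDx u) t x
  + 2 * (mu - 1) * u t x * pDt u t x + 2 * nu * pDt u t x.

Section LocalConservation.

Variables (mu nu : R) (g G : R -> R) (D : R * R -> Prop) (u : R -> R -> R).
Hypotheses (HD : open D) (HS : smooth_on D u).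

Lemma Tdens_is_derive_t t x :
  D (t, x) -> is_derive (fun s => Tdens mu nu u s x) t (Tdens_t mu nu u t x).
Proof.
  intros Hin; unfold Tdens; eapply is_derive_eq; [derive_jets D |].
  unfold Tdens_t; cbn [pd]; ring.
Qed.

Lemma Tdens_continuous t x : D (t, x) -> continuous (Tdens mu nu u t) x.
Proof.
  intros Hin; apply (@ex_derive_continuous R_AbsRing R_NormedModule).
  eexists; unfold Tdens; derive_jets D.
Qed.

Lemma Tdens_t_continuity_2d t x : D (t, x) -> continuity_2d_pt (Tdens_t mu nu u) t x.
Proof. intros Hin; unfold Tdens_t; continuity_jets D. Qed.

Lemma pDt_mfun t x :
  D (t, x) -> pDt (mfun u) t x = pDt u t x - pDt (pDx (pDx u)) t x.
Proof.
  intros Hin; unfold pDt at 1, mfun; apply is_derive_unique.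
  eapply is_derive_eq; [derive_jets D | reflexivity].
Qed.

Lemma pDx_g_mfun t x g1 :
  D (t, x) -> is_derive g (u t x) g1 ->
  pDx (fun s y => g (u s y) * mfun u s y) t x
  = g1 * pDx u t x * mfun u t x + g (u t x) * (pDx u t x - pDx (pDx (pDx u)) t x).
Proof.
  intros Hin Hg1; unfold pDx at 1, mfun; apply is_derive_unique.
  eapply is_derive_eq; [derive_jets D | cbn [pd]; ring].
Qed.

Lemma Phi_is_derive_x t x g1 g2 :
  D (t, x) -> is_derive g (u t x) g1 -> is_derive (Derive g) (u t x) g2 ->
  is_derive G (u t x) (g (u t x)) ->
  let w := (mu - 2) * u t x + nu in
  is_derive (fun y => Phi mu nu g G u t y) x
    (- Tdens_t mu nu u t x
     + 2 * (mfun u t x + w)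
         * (pDt (mfun u) t x + pDx (fun s y => g (u s y) * mfun u s y) t x)
     - (mfun u t x + w) * mfun u t x * pDx u t x * g1
     + / 2 * pDx u t x ^ 3 * (3 * (mu - 2) * g1 + w * g2)).
Proof.
  intros Hin Hg1 Hg2 HG w.
  rewrite pDt_mfun, (pDx_g_mfun t x g1) by assumption.
  assert (Hg : Derive g (u t x) = g1) by exact (is_derive_unique _ _ _ Hg1).
  unfold Phi, mfun; cbv zeta.
  eapply is_derive_eq; [derive_jets D |].
  unfold Tdens_t, w; cbn [pd].
  rewrite Hg, (pDt_pDx_comm D HD u), (pDt_pDx_pDx_comm D HD u) by assumption.
  field.
Qed.

Variable f : R -> R -> R.
Hypothesis Hsol : is_solution f g D u.

Lemma Phi_is_derive_x_admissible t x :
  D (t, x) -> admissible_at mu nu f g G (u t x) ->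
  is_derive (fun y => Phi mu nu g G u t y) x (- Tdens_t mu nu u t x).
Proof.
  intros Hin (g1 & g2 & Hg1 & Hg2 & HG & Hfg & Hg12).
  eapply is_derive_eq; [exact (Phi_is_derive_x t x g1 g2 Hin Hg1 Hg2 HG) |].
  cbv zeta.
  assert (Hm : pDt (mfun u) t x + pDx (fun s y => g (u s y) * mfun u s y) t x
               = - f (u t x) (pDx u t x) * mfun u t x).
  { pose proof (Hsol t x Hin); lra. }
  assert (Hf : f (u t x) (pDx u t x) = - / 2 * pDx u t x * g1)
    by (pose proof (Hfg (pDx u t x)); lra).
  rewrite Hm, Hg12, Hf; field.
Qed.

End LocalConservation.

Lemma family_a_admissible mu nu f g G :
  family_a mu nu f g G -> forall y, admissible_at mu nu f g G y.
Proof.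
  intros (h & Hh & -> & -> & Hf & Hg & HG) y.
  assert (Hgh : forall z, h z = g z) by (intros; symmetry; apply Hg).
  exists (Derive h y), (Derive (Derive h) y); split; [| split; [| split; [| split]]].
  - apply (is_derive_ext h g y _ Hgh), Derive_correct, (Hh 0%nat y).
  - apply (is_derive_ext (Derive h) (Derive g) y); [intros; apply Derive_ext, Hgh |].
    apply Derive_correct, (Hh 1%nat y).
  - apply HG.
  - intros p; rewrite Hf; field.
  - ring.
Qed.

Lemma family_b_admissible mu nu f g G :
  family_b mu nu f g G -> forall y, admissible_at mu nu f g G y.
Proof.
  intros (al & be & _ & -> & Hf & Hg & HG) y.
  assert (Hg1 : forall z, is_derive g z (-2 * al)).
  { intros z; apply (is_derive_ext (fun z => -2 * al * z + be) g z).
    - intros; symmetry; apply Hg.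
    - auto_derive; [exact I | ring]. }
  exists (-2 * al), 0; split; [| split; [| split; [| split]]].
  - apply Hg1.
  - apply (is_derive_ext (fun _ => -2 * al) (Derive g) y).
    + intros; symmetry; apply is_derive_unique, Hg1.
    + exact (is_derive_const _ y : is_derive _ y 0).
  - apply HG.
  - intros p; rewrite Hf; field.
  - ring.
Qed.

Lemma family_c_admissible mu nu f g G D u :
  family_c mu nu f g G D u -> forall t x, D (t, x) -> admissible_at mu nu f g G (u t x).
Proof.
  intros (al & be & _ & -> & Hf & Hg & HG & Hu) t x Hin.
  assert (Hnear : forall y, y + be <> 0 -> locally y (fun z => z + be <> 0)).
  { intros y Hy; apply (locally_open (fun z => z <> - be)); [apply open_neq | | ]; intros; lra. }
  assert (Hg1 : forall y, y + be <> 0 -> is_derive g y (-2 * al / (y + be) ^ 3)).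
  { intros y Hy; apply (is_derive_ext_loc (fun z => al / (z + be) ^ 2) g y).
    - apply (filter_imp (fun z => z + be <> 0)); [| exact (Hnear y Hy)].
      intros z Hz; symmetry; exact (Hg z Hz).
    - auto_derive; [| field; exact Hy].
      repeat first [exact Hy | exact R1_neq_R0 | apply Rmult_integral_contrapositive_currified]. }
  pose proof (Hu t x Hin) as Hy; set (y := u t x) in *.
  exists (-2 * al / (y + be) ^ 3), (6 * al / (y + be) ^ 4).
  split; [| split; [| split; [| split]]].
  - now apply Hg1.
  - apply (is_derive_ext_loc (fun z => -2 * al / (z + be) ^ 3) (Derive g) y).
    + apply (filter_imp (fun z => z + be <> 0)); [| exact (Hnear y Hy)].
      intros z Hz; symmetry; exact (is_derive_unique _ _ _ (Hg1 z Hz)).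
    + auto_derive; [| field; exact Hy].
      repeat first [exact Hy | exact R1_neq_R0 | apply Rmult_integral_contrapositive_currified].
  - now apply HG.
  - intros p; rewrite Hf by exact Hy; field; exact Hy.
  - field; exact Hy.
Qed.

Lemma families_admissible mu nu f g G D u :
  family_a mu nu f g G \/ family_b mu nu f g G \/ family_c mu nu f g G D u ->
  forall t x, D (t, x) -> admissible_at mu nu f g G (u t x).
Proof.
  intros [Ha | [Hb | Hc]] t x Hin.
  - exact (family_a_admissible _ _ _ _ _ Ha _).
  - exact (family_b_admissible _ _ _ _ _ Hb _).
  - exact (family_c_admissible _ _ _ _ _ _ _ Hc t x Hin).
Qed.

Theorem theorem3 :
  forall (mu nu : R) (f : R -> R -> R) (g G : R -> R)
         (D : R * R -> Prop) (u : R -> R -> R),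
    open D ->
    smooth_on D u ->
    (family_a mu nu f g G \/ family_b mu nu f g G \/ family_c mu nu f g G D u) ->
    is_solution f g D u ->
    (* local conservation law D_t T + D_x Phi = 0 *)
    (forall t x, D (t, x) ->
       pDt (Tdens mu nu u) t x + pDx (Phi mu nu g G u) t x = 0)
    /\
    (* conservation of the gradient energy on Omega = [a,b] *)
    (forall a b t1 t2 : R, a < b -> t1 < t2 ->
       (forall t x, t1 < t < t2 -> a <= x <= b -> D (t, x)) ->
       (forall t, t1 < t < t2 ->
          Phi mu nu g G u t a = 0 /\ Phi mu nu g G u t b = 0) ->
       forall t, t1 < t < t2 -> is_derive (Energy mu nu u a b) t 0).
Proof.
  intros mu nu f g G D u HD HS Hfam Hsol.
  assert (Hflux : forall t x, D (t, x) ->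
            is_derive (fun y => Phi mu nu g G u t y) x (- Tdens_t mu nu u t x)).
  { intros t x Hin.
    exact (Phi_is_derive_x_admissible mu nu g G D u HD HS f Hsol t x Hin
             (families_admissible mu nu f g G D u Hfam t x Hin)). }
  split.
  - intros t x Hin.
    assert (HT : pDt (Tdens mu nu u) t x = Tdens_t mu nu u t x)
      by exact (is_derive_unique _ _ _ (Tdens_is_derive_t mu nu D u HS t x Hin)).
    assert (HPhi : pDx (Phi mu nu g G u) t x = - Tdens_t mu nu u t x)
      by exact (is_derive_unique _ _ _ (Hflux t x Hin)).
    rewrite HT, HPhi; ring.
  - intros a b t1 t2 Hab _ Htube Hbdry t Ht.
    destruct (Hbdry t Ht) as [Ha Hb].
    assert (Hbal : RInt (Tdens_t mu nu u t) a b = 0).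
    { rewrite (RInt_flux D (Tdens_t mu nu u) (Phi mu nu g G u) a b t1 t2 (Rlt_le _ _ Hab)
                 Htube (Tdens_t_continuity_2d mu nu D u HS) Hflux t Ht), Ha, Hb.
      apply Rminus_eq_0. }
    rewrite <- Hbal.
    exact (is_derive_RInt_param_tube D (Tdens mu nu u) (Tdens_t mu nu u) a b t1 t2 HD
             (Rlt_le _ _ Hab) Htube (Tdens_is_derive_t mu nu D u HS)
             (Tdens_continuous mu nu D u HS) (Tdens_t_continuity_2d mu nu D u HS) t Ht).
Qed.
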